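(* Let $k\ge2$ be an integer. Then for all $n\in\mathbb Z$, $L_k^{(n)}L_k^{(-n)}=H$, where $H=(L_k^{(0)})^2$.
   Context: Fix an integer $k\ge2$. Let $Q_k$ be the $k\times k$ matrix whose first row is all ones, with $(Q_k)_{i+1,i}=1$ for $1\le i\le k-1$ and all other entries $0$, and for $r\in\mathbb Z$ let $Q_k^r$ denote its $r$-th power. The generalized Lucas sequence of order $k$, $(l_{k,n})_{n\in\mathbb Z}$, is the two-sided sequence satisfying $l_{k,n+k}=l_{k,n+k-1}+\dots+l_{k,n}$ for all $n\in\mathbb Z$ with initial values $l_{k,r}=\operatorname{trace}(Q_k^r)$ for $0\le r\le k-1$ (so $l_{k,0}=k$ and $l_{k,r}=2^r-1$ for $1\le r\le k-1$). For $n\in\mathbb Z$ the generalized Lucas matrix $L_k^{(n)}$ is the $k\times k$ matrix with entries $(L_k^{(n)})_{i,1}=l_{k,k+n-i}$ and $(L_k^{(n)})_{i,j}=\sum_{m=n-i+j-1}^{k+n-i-1} l_{k,m}$ for $2\le j\le k$, $1\le i\le k$. *)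

From HB Require Import structures.
From mathcomp Require Import all_boot all_order all_algebra.
Set Implicit Arguments. Unset Strict Implicit. Unset Printing Implicit Defensive.
Import Order.TTheory GRing.Theory Num.Theory.
Local Open Scope ring_scope.

Definition Qmat (k : nat) : 'M[int]_k :=
  \matrix_(i < k, j < k) (if (i == 0%N :> nat) then 1
                          else if (i == j.+1 :> nat) then 1 else 0).

Definition is_gen_lucas (k : nat) (l : int -> int) : Prop :=
  (forall n : int, l (n + k%:Z) = \sum_(t < k) l (n + t%:Z)) /\
  (forall r : nat, (r < k)%N -> l r%:Z = \tr (Qmat k ^+ r)).

(* Generalized Lucas matrix L_k^(n), 0-based: row i0 = i-1, column j0 = j-1.
   (L)_{i,1} = l(k+n-i);  (L)_{i,j} = sum_{m=n-i+j-1}^{k+n-i-1} l(m) for j >= 2. *)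
Definition lucas_mx (k : nat) (l : int -> int) (n : int) : 'M[int]_k :=
  \matrix_(i < k, j < k)
    (if (j == 0%N :> nat) then l (k%:Z + n - (i%:Z + 1))
     else \sum_(t < k - j) l (n - (i%:Z + 1) + (j%:Z + 1) - 1 + t%:Z)).

(* Multiplying a generalized Lucas matrix by Q_k on either side shifts its
   index: L(n) Q = L(n+1) = Q L(n).  Hence
   L(n+1) L(-(n+1)) = L(n) Q L(-(n+1)) = L(n) L(-n), so L(n) L(-n) does not
   depend on n. *)

From HB Require Import structures.
From mathcomp Require Import all_boot all_order all_algebra.
From mathcomp Require Import zify ring.
Import Order.TTheory GRing.Theory Num.Theory.
Local Open Scope ring_scope.

Lemma shift_invariant_const (T : Type) (f : int -> T) :
  (forall n, f (n + 1) = f n) -> forall n, f n = f 0.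
Proof.
move=> f_shift; elim/int_rect => [//|n IHn|n IHn].
  by rewrite -IHn -(f_shift n) -PoszD addn1.
by rewrite -IHn -(f_shift (- n.+1%:Z)); congr f; lia.
Qed.

Section LucasMatrixShift.

Variable K : nat.
Variable l : int -> int.
Hypothesis l_rec : forall n : int, l (n + K%:Z) = \sum_(t < K) l (n + t%:Z).

Definition seg_sum (p : int) (j : nat) : int :=
  \sum_(t < K - j) l (p + j%:Z + t%:Z).

Lemma seg_sum_ge p j : (K <= j)%N -> seg_sum p j = 0.
Proof. by move=> le_Kj; rewrite /seg_sum (_ : K - j = 0)%N ?big_ord0 //; lia. Qed.

Lemma seg_sum0 p : seg_sum p 0 = l (p + K%:Z).
Proof. by rewrite l_rec /seg_sum subn0; apply: eq_bigr => t _; rewrite addr0. Qed.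

Lemma seg_sumS p j : (j < K)%N -> seg_sum (p + 1) j = seg_sum p j.+1 + seg_sum p 0.
Proof.
move=> lt_jK; rewrite seg_sum0 /seg_sum (_ : K - j = (K - j.+1).+1)%N; last by lia.
rewrite big_ord_recr /=; congr (_ + l _); last by lia.
by apply: eq_bigr => t _; congr l; lia.
Qed.

Lemma sum_prev_terms x : \sum_(r < K) l (x - (r%:Z + 1)) = l x.
Proof.
have := l_rec (x - K%:Z); rewrite subrK => ->.
rewrite (reindex_inj rev_ord_inj); apply: eq_bigr => r _ /=.
by congr l; have := ltn_ord r; lia.
Qed.

Lemma lucas_mxE n (i j : 'I_K) : lucas_mx K l n i j = seg_sum (n - (i%:Z + 1)) j.
Proof.
rewrite mxE; case: eqP => [-> | _]; first by rewrite seg_sum0; congr l; ring.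
by apply: eq_bigr => t _; congr l; ring.
Qed.

Lemma mulmx_lucas_Q n : lucas_mx K l n *m Qmat K = lucas_mx K l (n + 1).
Proof.
apply/matrixP => i j; rewrite mxE lucas_mxE (_ : n + 1 - _ = n - (i%:Z + 1) + 1);
  last by ring.
set p := n - _; have K_gt0 : (0 < K)%N by apply: leq_ltn_trans (ltn_ord i).
transitivity (\sum_(r < K) ((if r == 0%N :> nat then seg_sum p r else 0)
                            + (if r == j.+1 :> nat then seg_sum p r else 0))).
  apply: eq_bigr => r _; rewrite lucas_mxE mxE.
  case: eqP => [-> | _]; first by rewrite mulr1 addr0.
  by case: eqP => _; rewrite ?mulr1 ?mulr0 ?add0r.
rewrite big_split /= -!big_mkcond !big_ord1_eq K_gt0 seg_sumS // addrC.
by case: ltnP => // le_Kj1; rewrite (seg_sum_ge _ _ le_Kj1).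
Qed.

Lemma mulmx_Q_lucas n : Qmat K *m lucas_mx K l n = lucas_mx K l (n + 1).
Proof.
apply/matrixP => i j; rewrite mxE lucas_mxE.
have [i0 | i_neq0] := eqVneq (i : nat) 0%N.
  transitivity (\sum_(r < K) seg_sum (n - (r%:Z + 1)) j).
    by apply: eq_bigr => r _; rewrite lucas_mxE mxE i0 mul1r.
  rewrite /seg_sum exchange_big i0; apply: eq_bigr => t _ /=.
  rewrite -sum_prev_terms; apply: eq_bigr => r _; congr l; ring.
transitivity (\sum_(r < K | r == i.-1 :> nat) seg_sum (n - (r%:Z + 1)) j).
  rewrite [RHS]big_mkcond; apply: eq_bigr => r _ /=.
  rewrite lucas_mxE mxE (negbTE i_neq0).
  have [-> | i_neq_r1] := eqVneq (i : nat) r.+1; first by rewrite eqxx mul1r.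
  by rewrite mul0r; case: eqP => // r_eq; case/eqP: i_neq_r1; lia.
rewrite (big_ord1_eq _ (fun r => seg_sum (n - (r%:Z + 1)) j)).
rewrite (_ : i.-1 < K)%N; last by have := ltn_ord i; lia.
by congr seg_sum; lia.
Qed.

End LucasMatrixShift.

Theorem theorem6 (k : nat) (l : int -> int) :
  (2 <= k)%N -> is_gen_lucas k l ->
  forall n : int,
    lucas_mx k l n *m lucas_mx k l (- n) = lucas_mx k l 0 *m lucas_mx k l 0.
Proof.
move=> _ [l_rec _].
pose prod_at n := lucas_mx k l n *m lucas_mx k l (- n).
have prod_shift n : prod_at (n + 1) = prod_at n.
  rewrite /prod_at -mulmx_lucas_Q // -mulmxA mulmx_Q_lucas //.
  by congr (_ *m lucas_mx k l _); ring.
exact: shift_invariant_const prod_shift.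
Qed.
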